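(* (1) For all $\lambda,\mu\in Y^+$, $(\lambda+\mu)^{++}\le_{Q^\vee}\lambda^{++}+\mu^{++}$. (2) For all $\mu\in Y^+$, $v\in W^v$ and $\nu\in R_v(\mu)$, one has $\nu\in Y^+$ and $\nu^{++}\le_{Q^\vee}\mu^{++}$.
   Context: $I$ finite, $A$ a generalized Cartan matrix, $Y$ a free $\mathbb Z$-module of finite rank with free family $(\alpha_i^\vee)_{i\in I}$ and $\alpha_i\in\mathrm{Hom}(Y,\mathbb Z)$ (free family) with $\alpha_j(\alpha_i^\vee)=a_{i,j}$; $\mathbb A=Y\otimes\mathbb R$; $r_i(v)=v-\alpha_i(v)\alpha_i^\vee$; $W^v=\langle r_i\rangle$; $Q^\vee=\bigoplus\mathbb Z\alpha_i^\vee$, $Q^\vee_+=\bigoplus\mathbb N\alpha_i^\vee$, $x\le_{Q^\vee}y$ iff $y-x\in Q^\vee_+$; $C^v_f=\{\alpha_i>0\ \forall i\}$, $\mathcal T=\bigcup_w w\overline{C^v_f}$, $Y^+=Y\cap\mathcal T$. For $\lambda\in\mathcal T$, $\lambda^{++}$ is the unique element of $W^v\lambda\cap\overline{C^v_f}$. For $E\subset Y$, $R_i(E)=\mathrm{conv}(E\cup r_i(E))\cap(E+Q^\vee)$; $R_w(\lambda)=\bigcup R_{i_1}(\cdots R_{i_k}(\{\lambda\})\cdots)$ over all reduced expressions $w=r_{i_1}\cdots r_{i_k}$. *)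

(* Y = Z^n (row vectors over int), A = Y (x) R = R^n for an
   arbitrary real field R, index set I = 'I_k. *)
From HB Require Import structures.
From mathcomp Require Import all_boot all_order all_algebra.
Set Implicit Arguments. Unset Strict Implicit. Unset Printing Implicit Defensive.
Import Order.TTheory GRing.Theory Num.Theory.
Local Open Scope ring_scope.

(* canonical pairing Hom(Y,Z) x Y -> Z, Hom(Y,Z) identified with Z^n (dual basis) *)
Definition pairing (n : nat) (a y : 'rV[int]_n) : int := \sum_(j < n) a 0 j * y 0 j.

Definition is_GCM (k : nat) (A : 'M[int]_k) : Prop :=
  (forall i, A i i = 2) /\ (forall i j, i != j -> A i j <= 0) /\
  (forall i j, A i j = 0 <-> A j i = 0).

Definition free_family (k n : nat) (v : 'I_k -> 'rV[int]_n) : Prop :=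
  forall c : 'I_k -> int, \sum_(i < k) c i *: v i = 0 -> forall i, c i = 0.

Section KM.
Variables (R : realFieldType) (n k : nat) (acv alpha : 'I_k -> 'rV[int]_n).

Definition embY (y : 'rV[int]_n) : 'rV[R]_n := map_mx (fun z : int => z%:~R) y.
Definition alphaA (i : 'I_k) (v : 'rV[R]_n) : R := \sum_(j < n) (alpha i 0 j)%:~R * v 0 j.
Definition refl (i : 'I_k) (v : 'rV[R]_n) : 'rV[R]_n := v - alphaA i v *: embY (acv i).
(* the element r_{i1} ... r_{im} of W^v attached to the word [:: i1; ...; im] *)
Definition wact (s : seq 'I_k) (v : 'rV[R]_n) : 'rV[R]_n := foldr refl v s.
Definition domC (v : 'rV[R]_n) : Prop := forall i, 0 <= alphaA i v.
Definition Tits (v : 'rV[R]_n) : Prop := exists s w, domC w /\ v = wact s w.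
Definition Yplus (y : 'rV[int]_n) : Prop := Tits (embY y).
(* u is a (the) element of W^v v /\ closed C^v_f, i.e. u = v^{++} *)
Definition dom_conj (v u : 'rV[R]_n) : Prop := (exists s, u = wact s v) /\ domC u.
Definition leQ (u v : 'rV[R]_n) : Prop :=
  exists c : 'I_k -> nat, v - u = \sum_(i < k) embY (acv i) *+ c i.
Definition inQ (y : 'rV[int]_n) : Prop :=
  exists c : 'I_k -> int, y = \sum_(i < k) c i *: acv i.
Definition conv (S : 'rV[R]_n -> Prop) (x : 'rV[R]_n) : Prop :=
  exists m (p : 'I_m -> 'rV[R]_n) (t : 'I_m -> R),
    (forall j, S (p j)) /\ (forall j, 0 <= t j) /\ \sum_(j < m) t j = 1 /\
    x = \sum_(j < m) t j *: p j.
Definition Ri (i : 'I_k) (E : 'rV[int]_n -> Prop) (y : 'rV[int]_n) : Prop :=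
  conv (fun x => exists e, E e /\ (x = embY e \/ x = refl i (embY e))) (embY y) /\
  (exists e, E e /\ inQ (y - e)).
(* R_{i1}(R_{i2}(... R_{im}(E))) for the word [:: i1; ...; im] *)
Definition Rword (s : seq 'I_k) (E : 'rV[int]_n -> Prop) : 'rV[int]_n -> Prop :=
  foldr Ri E s.
Definition reduced_expr (w s : seq 'I_k) : Prop :=
  (forall v, wact s v = wact w v) /\
  (forall s', (forall v, wact s' v = wact w v) -> (size s <= size s')%N).
(* R_v(lam), v the element of W^v given by the word w *)
Definition Rw (w : seq 'I_k) (lam y : 'rV[int]_n) : Prop :=
  exists s, reduced_expr w s /\ Rword s (fun e => e = lam) y.
End KM.

(* For x in the closed fundamental chamber and any w in W^v, x - w x is a
   nonnegative real combination of the simple coroots.  This rests on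
   alpha_i(w x) >= 0 whenever r_i w is not shorter than w, proved by induction
   on the length by factoring w through a dihedral subgroup <r_i, r_j>, where
   everything is an explicit computation: the products r_i r_j have order
   2, 3, 4 or 6 when a_ij a_ji < 4, and alpha_i stays positive along the
   alternating words when a_ij a_ji >= 4.
   Conversely, if the W^v-orbit of some y in Y lies below B (for this cone
   order) and B - y is in Q^vee, then reflecting along some alpha_i(y) < 0
   strictly lowers the integral height of B - y, so some w y is dominant and
   y is in Y^+.  Both statements follow: the orbit of lam + mu lies below
   lam^{++} + mu^{++}, and R_i preserves "the orbit lies below mu^{++}",
   since it only adds convex combinations of points and their r_i-images. *)

From HB Require Import structures.
From mathcomp Require Import all_boot all_order all_algebra.
From mathcomp Require Import ring lra zify.
From Stdlib Require Import Classical_Prop Classical_Pred_Type IndefiniteDescription.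
Set Implicit Arguments. Unset Strict Implicit. Unset Printing Implicit Defensive.
Import Order.TTheory GRing.Theory Num.Theory.
Local Open Scope ring_scope.

Fixpoint alternating (x : bool) (m : nat) : seq bool :=
  if m is m'.+1 then x :: alternating (~~ x) m' else [::].

Lemma size_alternating x m : size (alternating x m) = m.
Proof. by elim: m x => [//|m IH] x /=; rewrite IH. Qed.

Lemma alternating_add x m r :
  alternating x (m + r) = alternating x m ++ alternating (odd m (+) x) r.
Proof. by elim: m x => [//|m IH] x /=; rewrite IH addbN addNb. Qed.

Lemma alternating_of_squarefree (u : seq bool) :
  (forall x a z, u <> x ++ a :: a :: z) -> u = alternating (head false u) (size u).
Proof.
elim: u => [//|a [//|a' t] IH] hsq.
have a'a : a' = ~~ a by case: a a' hsq {IH} => -[] // /(_ [::] _ t erefl).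
have e : a' :: t = alternating a' (size t).+1.
  by apply: IH => x a0 z e; apply: (hsq (a :: x) a0 z); rewrite /= e.
by rewrite {1}e /= a'a.
Qed.

(* Words in the dihedral group <r_i, r_j> are boolean words (true for r_i),
   with b = - a_ji and c = - a_ij.  On y with (alpha_i y, alpha_j y) = pq,
   [rank2_alpha s pq] gives (alpha_i, alpha_j) of s y, [rank2_shift s pq] the
   coordinates of s y - y on (alpha_i^vee, alpha_j^vee), and [rank2_dual g s]
   the coordinates of the transpose action on linear forms. *)
Section Rank2.
Variables (R : realFieldType) (b c : R).

Fixpoint rank2_alpha (s : seq bool) (pq : R * R) : R * R :=
  match s with
  | [::] => pq
  | x :: t => let z := rank2_alpha t pq in
      if x then (- z.1, z.2 + c * z.1) else (z.1 + b * z.2, - z.2)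
  end.

Fixpoint rank2_shift (s : seq bool) (pq : R * R) : R * R :=
  match s with
  | [::] => (0, 0)
  | x :: t => let z := rank2_alpha t pq in let d := rank2_shift t pq in
      if x then (d.1 - z.1, d.2) else (d.1, d.2 - z.2)
  end.

Fixpoint rank2_dual (g : R * R) (s : seq bool) : R * R :=
  match s with
  | [::] => g
  | x :: t => rank2_dual (if x then (c * g.2 - g.1, g.2) else (g.1, b * g.1 - g.2)) t
  end.

Lemma rank2_alpha_dual s g pq :
  g.1 * (rank2_alpha s pq).1 + g.2 * (rank2_alpha s pq).2 =
  (rank2_dual g s).1 * pq.1 + (rank2_dual g s).2 * pq.2.
Proof. by elim: s g => [//|[] t IH] g /=; rewrite -IH /=; ring. Qed.

Definition nonneg2 (g : R * R) := 0 <= g.1 /\ 0 <= g.2.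

Hypotheses (b_ge0 : 0 <= b) (c_ge0 : 0 <= c).

(* The two invariant cones swapped by the transposes of r_j and r_i. *)
Lemma rank2_dual_ge0_affine (hbc : 4 <= b * c) m : forall g,
  ([/\ 0 <= g.1, 0 <= g.2, 2 * g.2 <= b * g.1 & c * g.2 <= 2 * g.1] ->
     nonneg2 (rank2_dual g (alternating false m))) /\
  ([/\ 0 <= g.1, 0 <= g.2, 2 * g.1 <= c * g.2 & b * g.1 <= 2 * g.2] ->
     nonneg2 (rank2_dual g (alternating true m))).
Proof.
have bc4 : 0 <= b * c - 4 by rewrite subr_ge0.
elim: m => [|m IH] g; first by split=> -[].
split=> /= -[g1 g2 h3 h4].
- apply: (proj2 (IH _)) => /=.
  have := mulr_ge0 bc4 g1; have := mulr_ge0 b_ge0 g1; split; nra.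
- apply: (proj1 (IH _)) => /=.
  have := mulr_ge0 bc4 g2; have := mulr_ge0 c_ge0 g2; split; nra.
Qed.

Lemma rank2_dual_ge0_infinite (hbc : 4 <= b * c) m :
  nonneg2 (rank2_dual (1, 0) (alternating false m)).
Proof.
apply: (proj1 (rank2_dual_ge0_affine hbc m _)).
by split; rewrite /= ?mulr0 ?mulr1 ?ler01 ?mulr_ge0 ?ler0n.
Qed.
End Rank2.

(* The finite types A1 x A1, A2, B2, G2, where the braid relation has length
   M = 2, 3, 4, 6. *)
Lemma rank2_finite (R : realFieldType) (b c : nat) :
  (b == 0)%N = (c == 0)%N -> (b * c < 4)%N ->
  exists2 M, (0 < M)%N &
    (forall pq, rank2_shift (b%:R : R) c%:R (alternating false M) pq =
                rank2_shift b%:R c%:R (alternating true M) pq) /\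
    (forall m, (m < M)%N -> nonneg2 (rank2_dual (b%:R : R) c%:R (1, 0) (alternating false m))).
Proof.
move: b c => [|[|[|[|b]]]] [|[|[|[|c]]]] //= _ hbc; try lia;
  [exists 2%N | exists 3%N | exists 4%N | exists 6%N | exists 4%N | exists 6%N] => //;
  (split; [by case=> p q /=; congr pair; ring |
           by case=> [|[|[|[|[|[|m]]]]]] //= _; rewrite /nonneg2 /=; lra]).
Qed.

Section Realization.
Variables (R : realFieldType) (k n : nat) (acv alpha : 'I_k -> 'rV[int]_n).

Local Notation embY := (@embY R n).
Local Notation alphaA := (@alphaA R n k alpha).
Local Notation refl := (@refl R n k acv alpha).
Local Notation wact := (@wact R n k acv alpha).
Local Notation domC := (@domC R n k alpha).
Local Notation coroot i := (embY (acv i)).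

Lemma alphaAD i u v : alphaA i (u + v) = alphaA i u + alphaA i v.
Proof. by rewrite /alphaA -big_split; apply: eq_bigr => j _; rewrite mxE mulrDr. Qed.

Lemma alphaAZ i t u : alphaA i (t *: u) = t * alphaA i u.
Proof. by rewrite /alphaA mulr_sumr; apply: eq_bigr => j _; rewrite mxE mulrCA. Qed.

Lemma alphaAB i u v : alphaA i (u - v) = alphaA i u - alphaA i v.
Proof. by rewrite alphaAD -scaleN1r alphaAZ mulN1r. Qed.

Lemma alphaA_embY i (z : 'rV[int]_n) : alphaA i (embY z) = (pairing (alpha i) z)%:~R.
Proof.
by rewrite /alphaA /pairing rmorph_sum; apply: eq_bigr => j _; rewrite mxE rmorphM.
Qed.

Lemma embYD (a b : 'rV[int]_n) : embY (a + b) = embY a + embY b.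
Proof. exact: map_mxD. Qed.

Lemma embYB (a b : 'rV[int]_n) : embY (a - b) = embY a - embY b.
Proof. exact: map_mxB. Qed.

Lemma embYZ (m : int) (a : 'rV[int]_n) : embY (m *: a) = m%:~R *: embY a.
Proof. by apply/matrixP => x y; rewrite !mxE intrM. Qed.

Lemma embY_sum m (F : 'I_m -> 'rV[int]_n) :
  embY (\sum_(j < m) F j) = \sum_(j < m) embY (F j).
Proof. exact: map_mx_sum. Qed.

Lemma reflD i u v : refl i (u + v) = refl i u + refl i v.
Proof. by rewrite /refl alphaAD scalerDl opprD addrACA. Qed.

Lemma reflZ i t u : refl i (t *: u) = t *: refl i u.
Proof. by rewrite /refl alphaAZ scalerBr scalerA. Qed.

Lemma wact_cons i s v : wact (i :: s) v = refl i (wact s v).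
Proof. by []. Qed.

Lemma wact_cat s t v : wact (s ++ t) v = wact s (wact t v).
Proof. exact: foldr_cat. Qed.

Lemma wactD s u v : wact s (u + v) = wact s u + wact s v.
Proof. by elim: s => [//|i s IH]; rewrite !wact_cons IH reflD. Qed.

Lemma wactZ s t u : wact s (t *: u) = t *: wact s u.
Proof. by elim: s => [//|i s IH]; rewrite !wact_cons IH reflZ. Qed.

Lemma wact_lincomb s m (t : 'I_m -> R) (p : 'I_m -> 'rV[R]_n) :
  wact s (\sum_(j < m) t j *: p j) = \sum_(j < m) t j *: wact s (p j).
Proof.
elim/big_rec2: _ => [|j x y _ <-]; last by rewrite wactD wactZ.
by rewrite -(scale0r (0 : 'rV[R]_n)) wactZ !scale0r.
Qed.

Definition coroot_lattice (v : 'rV[R]_n) : Prop :=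
  exists z : 'I_k -> int, v = \sum_i (z i)%:~R *: coroot i.

Definition integral (y : 'rV[R]_n) : Prop := exists z : 'rV[int]_n, y = embY z.

Definition cone_le (u v : 'rV[R]_n) : Prop :=
  exists c : 'I_k -> R, (forall i, 0 <= c i) /\ v - u = \sum_i c i *: coroot i.

Lemma coroot_lattice0 : coroot_lattice 0.
Proof. by exists (fun _ => 0); rewrite big1 // => i _; rewrite scale0r. Qed.

Lemma coroot_latticeD u v :
  coroot_lattice u -> coroot_lattice v -> coroot_lattice (u + v).
Proof.
move=> [z ->] [z' ->]; exists (fun i => z i + z' i).
by rewrite -big_split; apply: eq_bigr => i _; rewrite intrD scalerDl.
Qed.

Lemma coroot_latticeN u : coroot_lattice u -> coroot_lattice (- u).
Proof.
move=> [z ->]; exists (fun i => - z i).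
by rewrite -sumrN; apply: eq_bigr => i _; rewrite intrN scaleNr.
Qed.

Lemma coroot_latticeB u v :
  coroot_lattice u -> coroot_lattice v -> coroot_lattice (u - v).
Proof. by move=> hu hv; apply: coroot_latticeD => //; apply: coroot_latticeN. Qed.

Lemma cone_le_refl u : cone_le u u.
Proof.
by exists (fun _ => 0); split=> //; rewrite subrr big1 // => i _; rewrite scale0r.
Qed.

Lemma cone_leD u v u' v' : cone_le u v -> cone_le u' v' -> cone_le (u + u') (v + v').
Proof.
move=> [c [c0 hc]] [d [d0 hd]]; exists (fun i => c i + d i); split.
  by move=> i; rewrite addr_ge0.
rewrite opprD addrACA hc hd -big_split.
by apply: eq_bigr => i _; rewrite scalerDl.
Qed.

Lemma cone_le_sub_coroot u x i a :
  cone_le u x -> 0 <= a -> cone_le (u - a *: coroot i) x.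
Proof.
move=> [c [c0 hc]] ha; exists (fun j => c j + (if j == i then a else 0)); split.
  by move=> j; case: eqP => _; rewrite ?addr0 // addr_ge0.
rewrite opprB addrA addrAC hc.
rewrite [RHS](eq_bigr (fun j => c j *: coroot j + (if j == i then a else 0) *: coroot j));
  last by move=> j _; rewrite scalerDl.
rewrite big_split /=; congr (_ + _).
by rewrite (bigD1 i) //= eqxx big1 ?addr0 // => j /negbTE ->; rewrite scale0r.
Qed.

Lemma cone_le_convex m (t : 'I_m -> R) (q : 'I_m -> 'rV[R]_n) B :
  (forall j, 0 <= t j) -> \sum_j t j = 1 -> (forall j, cone_le (q j) B) ->
  cone_le (\sum_j t j *: q j) B.
Proof.
move=> t0 t1 /(_ _) /constructive_indefinite_description hq.
pose C j := proj1_sig (hq j).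
exists (fun i => \sum_j t j * C j i); split.
  move=> i; apply: sumr_ge0 => j _; apply: mulr_ge0 => //.
  exact: (proj1 (proj2_sig (hq j))).
have -> : B - \sum_j t j *: q j = \sum_j t j *: (B - q j).
  by rewrite (eq_bigr _ (fun j _ => scalerBr _ _ _)) sumrB -scaler_suml t1 scale1r.
rewrite (eq_bigr (fun j => \sum_i (t j * C j i) *: coroot i)); last first.
  move=> j _; rewrite (proj2 (proj2_sig (hq j))) scaler_sumr.
  by apply: eq_bigr => i _; rewrite scalerA.
by rewrite exchange_big /=; apply: eq_bigr => i _; rewrite scaler_suml.
Qed.

Hypothesis hacv : free_family acv.

Definition coroot_mx : 'M[int]_(k, n) := \matrix_(i, j) acv i 0 j.

Lemma coroot_mx_row_free : row_free (map_mx (intr : int -> rat) coroot_mx).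
Proof.
apply: inj_row_free => v hv.
pose d : int := \prod_i denq (v 0 i).
pose z i : int := numq (v 0 i) * \prod_(j | j != i) denq (v 0 j).
have hz i : (z i)%:~R = v 0 i * d%:~R by rewrite /z /d [in RHS](bigD1 i) //= !intrM numqE; ring.
have d_neq0 : (d%:~R : rat) != 0.
  by rewrite intr_eq0; apply/prodf_neq0 => i _; exact: denq_neq0.
have hs : \sum_i z i *: acv i = 0.
  apply/rowP => b; rewrite summxE mxE; apply/eqP; rewrite -(intr_eq0 rat) rmorph_sum /=.
  have /rowP/(_ b) := hv; rewrite !mxE => hvb.
  have hvb' : \sum_i v 0 i * (acv i 0 b)%:~R = 0.
    by rewrite -[RHS]hvb; apply: eq_bigr => i _; rewrite !mxE.
  rewrite (eq_bigr (fun i => d%:~R * (v 0 i * (acv i 0 b)%:~R))); last first.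
    by move=> i _; rewrite !mxE rmorphM /= hz; ring.
  by rewrite -mulr_sumr hvb' mulr0.
apply/rowP => i; rewrite mxE.
have /(congr1 (fun x : int => x%:~R : rat)) := hacv hs i.
by rewrite hz /= => /eqP; rewrite mulf_eq0 (negbTE d_neq0) orbF => /eqP.
Qed.

Lemma coroot_coef_eq0 (c : 'I_k -> R) : \sum_i c i *: coroot i = 0 -> forall i, c i = 0.
Proof.
move=> hc i.
have free_R : row_free (map_mx (intr : int -> R) coroot_mx).
  have -> : map_mx (intr : int -> R) coroot_mx = map_mx ratr (map_mx intr coroot_mx).
    by apply/matrixP => a b; rewrite !mxE ratr_int.
  by rewrite row_free_map coroot_mx_row_free.
have : \row_i c i *m map_mx intr coroot_mx = 0.
  apply/rowP => b; rewrite !mxE.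
  transitivity ((\sum_i c i *: coroot i) 0 b); last by rewrite hc mxE.
  by rewrite summxE; apply: eq_bigr => j _; rewrite !mxE.
by move/eqP; rewrite mulmx_free_eq0 // => /eqP /rowP /(_ i); rewrite !mxE.
Qed.

Lemma coroot_coef_inj (c d : 'I_k -> R) :
  \sum_i c i *: coroot i = \sum_i d i *: coroot i -> forall i, c i = d i.
Proof.
move=> h i; apply/eqP; rewrite -subr_eq0; apply/eqP; move: i.
apply: coroot_coef_eq0.
by rewrite (eq_bigr _ (fun i _ => scalerBl _ _ _)) sumrB h subrr.
Qed.

Lemma leQ_of_cone_le u v : cone_le u v -> coroot_lattice (v - u) -> leQ acv u v.
Proof.
move=> [c [c0 hc]] [z hz].
have e := coroot_coef_inj (etrans (esym hc) hz).
exists (fun i => `|z i|%N); rewrite hc; apply: eq_bigr => i _.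
have zi : 0 <= z i by rewrite -(ler0z R) -e.
by rewrite e -scaler_nat -[(`|z i|%N)%:R]/((`|z i|%N)%:~R) (gez0_abs zi).
Qed.

Lemma integral_refl i y : integral y -> integral (refl i y).
Proof.
move=> [z ->]; exists (z - pairing (alpha i) z *: acv i).
by rewrite embYB embYZ /refl alphaA_embY.
Qed.

Lemma integral_wact s y : integral y -> integral (wact s y).
Proof. by elim: s => [//|i s IH] /IH; apply: integral_refl. Qed.

Lemma coroot_lattice_refl i y : integral y -> coroot_lattice (refl i y - y).
Proof.
move=> [z ->]; exists (fun j => if j == i then - pairing (alpha i) z else 0).
rewrite (bigD1 i) //= eqxx big1 ?addr0; last by move=> j /negbTE ->; rewrite scale0r.
by rewrite /refl alphaA_embY addrAC subrr add0r intrN scaleNr.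
Qed.

Lemma coroot_lattice_wact s y : integral y -> coroot_lattice (wact s y - y).
Proof.
elim: s => [|i s IH] hy; first by rewrite subrr; apply: coroot_lattice0.
rewrite wact_cons -(subrK (wact s y) (refl i _)) -addrA.
by apply: coroot_latticeD; [apply/coroot_lattice_refl/integral_wact | apply: IH].
Qed.

Lemma inQD y z : inQ acv y -> inQ acv z -> inQ acv (y + z).
Proof.
move=> [c ->] [d ->]; exists (fun i => c i + d i).
by rewrite -big_split; apply: eq_bigr => i _; rewrite scalerDl.
Qed.

Lemma coroot_lattice_embY y : inQ acv y -> coroot_lattice (embY y).
Proof.
by move=> [c ->]; exists c; rewrite embY_sum; apply: eq_bigr => i _; rewrite embYZ.
Qed.

Definition wequiv (s t : seq 'I_k) : Prop := forall v, wact s v = wact t v.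

Definition reduced (s : seq 'I_k) : Prop := forall t, wequiv t s -> (size s <= size t)%N.

Definition no_left_descent (i : 'I_k) (s : seq 'I_k) : Prop :=
  forall t, wequiv t (i :: s) -> (size s <= size t)%N.

Lemma wequiv_sym s t : wequiv s t -> wequiv t s.
Proof. by move=> h v; rewrite h. Qed.

Lemma wequiv_trans s t u : wequiv s t -> wequiv t u -> wequiv s u.
Proof. by move=> h h' v; rewrite h h'. Qed.

Lemma wequiv_cat s s' t t' : wequiv s s' -> wequiv t t' -> wequiv (s ++ t) (s' ++ t').
Proof. by move=> h h' v; rewrite !wact_cat h h'. Qed.

Lemma wequiv_cons a s s' : wequiv s s' -> wequiv (a :: s) (a :: s').
Proof. by move=> h v; rewrite !wact_cons h. Qed.

Lemma reducedP s : reduced s \/ exists2 t, wequiv t s & (size t < size s)%N.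
Proof.
case: (classic (exists2 t, wequiv t s & (size t < size s)%N)) => [|ns]; first by right.
by left=> t ets; rewrite leqNgt; apply/negP => lt; apply: ns; exists t.
Qed.

Lemma no_left_descentP i s :
  no_left_descent i s \/ exists2 t, wequiv t (i :: s) & (size t < size s)%N.
Proof.
case: (classic (exists2 t, wequiv t (i :: s) & (size t < size s)%N)) => [|ns]; first by right.
by left=> t ets; rewrite leqNgt; apply/negP => lt; apply: ns; exists t.
Qed.

Lemma exists_reduced s : exists2 s', wequiv s' s & reduced s'.
Proof.
have [N] := ubnP (size s); elim: N s => // N IH s hN.
have [r|[t ets lt]] := reducedP s; first by exists s.
have [s' es' r'] := IH t (leq_trans lt hN).
by exists s' => //; apply: wequiv_trans ets.
Qed.

Lemma reduced_behead i s : reduced (i :: s) -> reduced s.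
Proof. by move=> h t /(wequiv_cons i) /h; rewrite /= ltnS. Qed.

Lemma reduced_no_left_descent i s : reduced (i :: s) -> no_left_descent i s.
Proof. by move=> h t /h; apply: ltnW. Qed.

Lemma reduced_prefix p v w :
  wequiv (p ++ v) w -> (size p + size v <= size w)%N -> reduced w -> reduced p.
Proof.
move=> e hs hred t et; rewrite -(leq_add2r (size v)) (leq_trans hs) // -size_cat.
by apply/hred/(wequiv_trans _ e)/wequiv_cat.
Qed.

Lemma no_left_descent_prefix i p v w :
  wequiv (p ++ v) w -> (size p + size v <= size w)%N ->
  no_left_descent i w -> no_left_descent i p.
Proof.
move=> e hs hnd t et; rewrite -(leq_add2r (size v)) (leq_trans hs) // -size_cat.
exact/hnd/(wequiv_trans _ (wequiv_cons i e))/(wequiv_cat et).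
Qed.

Variable A : 'M[int]_k.
Hypotheses (hA : is_GCM A) (hpair : forall i j, pairing (alpha j) (acv i) = A i j).

Lemma alphaA_refl i j x : alphaA j (refl i x) = alphaA j x - alphaA i x * (A i j)%:~R.
Proof. by rewrite /refl alphaAB alphaAZ alphaA_embY hpair. Qed.

Lemma reflK i : involutive (refl i).
Proof.
move=> v; rewrite {1}/refl alphaA_refl (proj1 hA).
rewrite -addrA -opprD -scalerDl [_ + (_ - _)](_ : _ = 0) ?scale0r ?subr0 //.
by rewrite [(2 : int)%:~R]/=; ring.
Qed.

Lemma wequiv_square a s : wequiv (a :: a :: s) s.
Proof. by move=> v; rewrite !wact_cons reflK. Qed.

Lemma wact_revK s : cancel (wact s) (wact (rev s)).
Proof.
elim: s => [//|i s IH] v.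
by rewrite rev_cons -cats1 wact_cat wact_cons /= reflK IH.
Qed.

Definition letter (i j : 'I_k) (x : bool) : 'I_k := if x then i else j.

Section Rank2Parabolic.
Variables i j : 'I_k.

Local Notation b := ((- A j i)%:~R : R).
Local Notation c := ((- A i j)%:~R : R).
Local Notation word s := (map (letter i j) s).

Lemma wact_letters s y :
  (alphaA i (wact (word s) y), alphaA j (wact (word s) y)) =
     rank2_alpha b c s (alphaA i y, alphaA j y) /\
  wact (word s) y = y + (rank2_shift b c s (alphaA i y, alphaA j y)).1 *: coroot i
                      + (rank2_shift b c s (alphaA i y, alphaA j y)).2 *: coroot j.
Proof.
elim: s => [|x t [e1 e2]] /=; first by rewrite !scale0r !addr0.
set z := rank2_alpha _ _ t _ in e1 *; set d := rank2_shift _ _ t _ in e2 *.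
have hz1 : alphaA i (wact (word t) y) = z.1 by rewrite -e1.
have hz2 : alphaA j (wact (word t) y) = z.2 by rewrite -e1.
case: x; rewrite /letter /= !alphaA_refl hz1 hz2 (proj1 hA) !intrN /refl ?hz1 ?hz2 e2.
  by split; [congr pair; ring | rewrite scalerBl addrA [RHS]addrAC].
by split; [congr pair; ring | rewrite scalerBl addrA].
Qed.

Lemma wequiv_braid M :
  (forall pq, rank2_shift b c (alternating false M) pq =
              rank2_shift b c (alternating true M) pq) ->
  wequiv (word (alternating false M)) (word (alternating true M)).
Proof. by move=> h y; rewrite (proj2 (wact_letters _ _)) (proj2 (wact_letters _ _)) h. Qed.

Lemma reduced_alternating u :
  reduced (word u) -> no_left_descent i (word u) -> u = alternating false (size u).
Proof.
move=> hred hnd.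
have hsq : forall x a z, u <> x ++ a :: a :: z.
  move=> x a z hu; have := hred (word (x ++ z)); rewrite hu !map_cat !size_cat /=.
  have sq : wequiv (word x ++ word z) (word x ++ letter i j a :: letter i j a :: word z).
    exact: (wequiv_cat (fun _ => erefl) (wequiv_sym (wequiv_square _ _))).
  by move=> /(_ sq); rewrite size_map; lia.
rewrite {1}(alternating_of_squarefree hsq).
case: u {hred hsq} hnd => [//|[] t] //= hnd.
by have := hnd _ (wequiv_sym (wequiv_square _ _)); rewrite /= size_map ltnn.
Qed.

Lemma alternating_lt_braid m M :
  wequiv (word (alternating false M)) (word (alternating true M)) -> (0 < M)%N ->
  no_left_descent i (word (alternating false m)) -> (m < M)%N.
Proof.
case: M => [//|M] hbr _ hnd; rewrite ltnNge; apply/negP => hMm.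
pose r := alternating (odd M.+1 (+) false) (m - M.+1).
have e : alternating false m = alternating false M.+1 ++ r.
  by rewrite -alternating_add subnKC.
have /hnd : wequiv (word (alternating false M ++ r)) (i :: word (alternating false m)).
  rewrite e !map_cat.
  apply: wequiv_trans (wequiv_cons _ (wequiv_cat (wequiv_sym hbr) (fun _ => erefl))).
  exact: wequiv_sym (wequiv_square _ _).
by rewrite !size_map size_cat !size_alternating; lia.
Qed.

Lemma rank2_dual_alternating_ge0 m :
  i != j -> no_left_descent i (word (alternating false m)) ->
  nonneg2 (rank2_dual b c (1, 0) (alternating false m)).
Proof.
move=> ij hnd; case: hA => _ [Aneg Asym].
have [Bn eB] : exists Bn : nat, - A j i = Bn%:Z.
  by exists `|- A j i|%N; rewrite gez0_abs // oppr_ge0 Aneg // eq_sym.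
have [Cn eC] : exists Cn : nat, - A i j = Cn%:Z.
  by exists `|- A i j|%N; rewrite gez0_abs // oppr_ge0 Aneg.
have hbr M : (forall pq, rank2_shift (Bn%:R : R) Cn%:R (alternating false M) pq =
                         rank2_shift Bn%:R Cn%:R (alternating true M) pq) ->
    wequiv (word (alternating false M)) (word (alternating true M)).
  by move=> h; apply: wequiv_braid; rewrite eB eC.
rewrite eB eC; case: (leqP 4 (Bn * Cn)) => hbc.
  by apply: rank2_dual_ge0_infinite; rewrite ?ler0n // -natrM ler_nat.
have hz : (Bn == 0)%N = (Cn == 0)%N.
  apply/idP/idP => /eqP h0; apply/eqP.
    have : A i j = 0 by apply/(Asym i j).2; lia.
    lia.
  have : A j i = 0 by apply/(Asym i j).1; lia.
  lia.
have [M M0 [braid hpos]] := rank2_finite R hz hbc.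
exact/hpos/(alternating_lt_braid (hbr _ braid)).
Qed.

Lemma alphaA_wact_rank2_ge0 u y :
  i != j -> reduced (word u) -> no_left_descent i (word u) ->
  0 <= alphaA i y -> 0 <= alphaA j y -> 0 <= alphaA i (wact (word u) y).
Proof.
move=> ij hred hnd hi hj.
have hu := reduced_alternating hred hnd; rewrite hu in hnd *.
have [/(congr1 fst) /= -> _] := wact_letters (alternating false (size u)) y.
have := rank2_alpha_dual b c (alternating false (size u)) (1, 0) (alphaA i y, alphaA j y).
rewrite /= mul1r mul0r addr0 => ->.
have [g1 g2] := rank2_dual_alternating_ge0 ij hnd.
by rewrite addr_ge0 ?mulr_ge0.
Qed.

End Rank2Parabolic.

Definition rank2_factor (i j : 'I_k) (w : seq 'I_k) (ub : seq bool) (v : seq 'I_k) : Prop :=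
  wequiv (map (letter i j) ub ++ v) w /\ (size ub + size v <= size w)%N.

Lemma exists_minimal_rank2_factor i j w ub0 v0 :
  rank2_factor i j w ub0 v0 ->
  exists ub v, [/\ rank2_factor i j w ub v, (size v <= size v0)%N, reduced v,
                   no_left_descent i v & no_left_descent j v].
Proof.
have [N] := ubnP (size v0); elim: N ub0 v0 => // N IH ub0 v0 hN [e hs].
have shorter ub t : rank2_factor i j w ub t -> (size t < size v0)%N ->
    exists ub' v, [/\ rank2_factor i j w ub' v, (size v <= size v0)%N, reduced v,
                      no_left_descent i v & no_left_descent j v].
  move=> ht lt; have [ub' [v [hv lev rv hvi hvj]]] := IH ub t (leq_trans lt hN) ht.
  by exists ub', v; split=> //; apply: leq_trans lev (ltnW lt).
have absorb x t : wequiv t (letter i j x :: v0) -> (size t < size v0)%N ->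
    rank2_factor i j w (ub0 ++ [:: x]) t.
  move=> et lt; split; last by rewrite size_cat /=; lia.
  rewrite map_cat -catA; apply: wequiv_trans e; apply: wequiv_cat (fun _ => erefl) _.
  exact: wequiv_trans (wequiv_cons _ et) (wequiv_square _ _).
have [r|[t et lt]] := reducedP v0.
  have [hi|[t et lt]] := no_left_descentP i v0; last exact: shorter _ _ (absorb true t et lt) lt.
  have [hj|[t et lt]] := no_left_descentP j v0; last exact: shorter _ _ (absorb false t et lt) lt.
  by exists ub0, v0.
apply: (shorter ub0 t _ lt); split; last by lia.
exact: wequiv_trans (wequiv_cat (fun _ => erefl) et) e.
Qed.

(* Humphreys' argument: w = u v with u in <r_i, r_j>, r_j the first letter
   of w, and v as short as possible. *)
Lemma alphaA_wact_dominant_ge0 w i x :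
  reduced w -> no_left_descent i w -> domC x -> 0 <= alphaA i (wact w x).
Proof.
have [N] := ubnP (size w); elim: N w i => // N IH [|j w1] i hN hred hnd hx; first exact: hx.
have ji : j != i.
  apply/eqP => eji; subst j.
  by have := hnd w1 (wequiv_sym (wequiv_square _ _)); rewrite /= ltnn.
have [ub [v [[e hs] hv rv hvi hvj]]] :=
  @exists_minimal_rank2_factor i j (j :: w1) [:: false] w1 (conj (fun _ => erefl) (leqnn _)).
have ltv : (size v < N)%N by move: hN => /=; lia.
rewrite -(size_map (letter i j)) in hs.
rewrite -(e x) wact_cat; apply: alphaA_wact_rank2_ge0.
- by rewrite eq_sym.
- exact: reduced_prefix e hs hred.
- exact: no_left_descent_prefix e hs hnd.
- exact: IH.
- exact: IH.
Qed.

Lemma wact_dominant_cone_le x s : domC x -> cone_le (wact s x) x.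
Proof.
move=> hx; have [s' es' r] := exists_reduced s; rewrite -es' {es'}.
elim: s' r => [|i w IH] r; first exact: cone_le_refl.
rewrite wact_cons {1}/refl; apply: cone_le_sub_coroot; first exact: IH (reduced_behead r).
exact: alphaA_wact_dominant_ge0 (reduced_behead r) (reduced_no_left_descent r) hx.
Qed.

Definition orbit_le (y B : 'rV[R]_n) : Prop := forall s, cone_le (wact s y) B.

Lemma orbit_le_wact s y B : orbit_le y B -> orbit_le (wact s y) B.
Proof. by move=> h t; rewrite -wact_cat. Qed.

Lemma orbit_leD y z B C : orbit_le y B -> orbit_le z C -> orbit_le (y + z) (B + C).
Proof. by move=> hy hz s; rewrite wactD; apply: cone_leD. Qed.

Lemma orbit_le_dom_conj y a : dom_conj acv alpha y a -> orbit_le y a.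
Proof.
move=> [[s ->] da] t; rewrite -{1}[y](wact_revK s) -wact_cat.
exact: wact_dominant_cone_le.
Qed.

Lemma dom_conj_lattice (y : 'rV[int]_n) a :
  dom_conj acv alpha (embY y) a -> coroot_lattice (a - embY y).
Proof. by move=> [[s ->] _]; apply: coroot_lattice_wact; exists y. Qed.

Lemma exists_dominant_wact y B :
  integral y -> orbit_le y B -> coroot_lattice (B - y) -> exists s, domC (wact s y).
Proof.
move=> hy hB hl; have [c hc] := leQ_of_cone_le (hB [::]) hl.
have [N] := ubnP (\sum_i c i)%N; elim: N y c hy hB hl hc => // N IH y c hy hB hl hc hN.
case: (classic (domC y)) => [dy|/not_all_ex_not [i /negP]]; first by exists [::].
rewrite -ltNge => hneg.
have hl' : coroot_lattice (B - refl i y).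
  rewrite (_ : B - refl i y = (B - y) - (refl i y - y)); last by rewrite [in RHS]opprB subrKA.
  exact: coroot_latticeB hl (coroot_lattice_refl i hy).
have hB' := orbit_le_wact [:: i] hB.
have [c' hc'] := leQ_of_cone_le (hB' [::]) hl'.
have ec : forall j, ((c' j)%:R : R) = (c j)%:R + (if j == i then alphaA i y else 0).
  apply: coroot_coef_inj; rewrite (eq_bigr _ (fun j _ => scalerDl _ _ _)) big_split /=.
  rewrite (eq_bigr _ (fun j _ => scaler_nat (c' j) (coroot j))).
  rewrite (eq_bigr _ (fun j _ => scaler_nat (c j) (coroot j))) -hc' -hc (bigD1 i) //= eqxx.
  rewrite big1 ?addr0 => [|j /negbTE ->]; last by rewrite scale0r.
  by rewrite /refl opprB addrA addrAC.
have ltc : (\sum_i c' i < \sum_i c i)%N.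
  rewrite -(ltr_nat R) !natr_sum (eq_bigr _ (fun j _ => ec j)) big_split /=.
  by rewrite -big_mkcond big_pred1_eq gtrDl.
have [s hs] := IH _ c' (integral_refl i hy) hB' hl' hc' (leq_trans ltc hN).
by exists (s ++ [:: i]); rewrite wact_cat.
Qed.

Lemma Yplus_of_orbit_le (y : 'rV[int]_n) B :
  orbit_le (embY y) B -> coroot_lattice (B - embY y) -> Yplus R acv alpha y.
Proof.
move=> hB hl; have [s hs] := exists_dominant_wact (ex_intro _ y erefl) hB hl.
by exists (rev s), (wact s (embY y)); rewrite wact_revK.
Qed.

Lemma Yplus_dom_conj y : Yplus R acv alpha y -> exists a, dom_conj acv alpha (embY y) a.
Proof.
move=> [s [w [dw e]]]; exists w; split=> //.
by exists (rev s); rewrite e wact_revK.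
Qed.

Lemma leQ_dom_conj (y : 'rV[int]_n) a B :
  dom_conj acv alpha (embY y) a -> orbit_le (embY y) B -> coroot_lattice (B - embY y) ->
  leQ acv a B.
Proof.
move=> ha hB hl; have [[s ea] _] := ha; apply: leQ_of_cone_le; first by rewrite ea; apply: hB.
rewrite (_ : B - a = (B - embY y) - (a - embY y)); last by rewrite [in RHS]opprB subrKA.
exact: coroot_latticeB hl (dom_conj_lattice ha).
Qed.

Lemma orbit_le_Ri i E B :
  (forall e, E e -> orbit_le (embY e) B) ->
  forall y, Ri R acv alpha i E y -> orbit_le (embY y) B.
Proof.
move=> hE y [[m [p [t [hp [t0 [t1 ->]]]]]] _] s.
rewrite wact_lincomb; apply: cone_le_convex => // l.
by have [e [/hE he [-> | ->]]] := hp l; [apply: he | apply: (orbit_le_wact [:: i] he)].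
Qed.

Lemma inQ_Ri i E mu y :
  (forall e, E e -> inQ acv (e - mu)) -> Ri R acv alpha i E y -> inQ acv (y - mu).
Proof. by move=> hE [_ [e [/hE he hq]]]; rewrite -(subrK e y) -addrA; apply: inQD. Qed.

Lemma Rword_bound s mu nu B :
  orbit_le (embY mu) B -> Rword R acv alpha s (fun e => e = mu) nu ->
  orbit_le (embY nu) B /\ inQ acv (nu - mu).
Proof.
move=> hmu; elim: s nu => [|i s IH] nu /=.
  by move=> ->; split=> //; exists (fun _ => 0); rewrite subrr big1 // => i _; rewrite scale0r.
by move=> hR; split; [apply: orbit_le_Ri hR | apply: inQ_Ri hR] => e /IH [].
Qed.

Lemma dom_conj_add_bound lam mu a b :
  dom_conj acv alpha (embY lam) a -> dom_conj acv alpha (embY mu) b ->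
  orbit_le (embY (lam + mu)) (a + b) /\ coroot_lattice (a + b - embY (lam + mu)).
Proof.
move=> ha hb; rewrite embYD; split.
  exact: orbit_leD (orbit_le_dom_conj ha) (orbit_le_dom_conj hb).
by rewrite opprD addrACA; apply: coroot_latticeD; apply: dom_conj_lattice.
Qed.

Lemma Rw_bound mu w nu b :
  Rw R acv alpha w mu nu -> dom_conj acv alpha (embY mu) b ->
  orbit_le (embY nu) b /\ coroot_lattice (b - embY nu).
Proof.
move=> [s [_ hR]] hb; have [hle hQ] := Rword_bound (orbit_le_dom_conj hb) hR.
split=> //; rewrite (_ : b - embY nu = (b - embY mu) - embY (nu - mu)).
  exact: coroot_latticeB (dom_conj_lattice hb) (coroot_lattice_embY hQ).
by rewrite embYB [in RHS]opprB subrKA.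
Qed.

End Realization.

Unset Implicit Arguments.

Theorem mainTheorem8 (R : realFieldType) (k n : nat) (A : 'M[int]_k)
  (acv alpha : 'I_k -> 'rV[int]_n)
  (hA : is_GCM A) (hacv : free_family acv) (halpha : free_family alpha)
  (hpair : forall i j, pairing (alpha j) (acv i) = A i j) :
  (forall lam mu : 'rV[int]_n,
     Yplus R acv alpha lam -> Yplus R acv alpha mu ->
     Yplus R acv alpha (lam + mu) /\
     (forall a b c : 'rV[R]_n,
        dom_conj acv alpha (embY R lam) a -> dom_conj acv alpha (embY R mu) b ->
        dom_conj acv alpha (embY R (lam + mu)) c -> leQ acv c (a + b)))
  /\
  (forall (mu : 'rV[int]_n) (w : seq 'I_k) (nu : 'rV[int]_n),
     Yplus R acv alpha mu -> Rw R acv alpha w mu nu ->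
     Yplus R acv alpha nu /\
     (forall a b : 'rV[R]_n,
        dom_conj acv alpha (embY R nu) a -> dom_conj acv alpha (embY R mu) b ->
        leQ acv a b)).
Proof.
split.
  move=> lam mu /(Yplus_dom_conj hA hpair) [a ha] /(Yplus_dom_conj hA hpair) [b hb].
  have [hle hlat] := dom_conj_add_bound hA hpair ha hb.
  split=> [|a' b' c ha' hb' hc]; first exact: (Yplus_of_orbit_le hacv hA hpair hle hlat).
  have [hle' hlat'] := dom_conj_add_bound hA hpair ha' hb'.
  exact: (leQ_dom_conj hacv hc hle' hlat').
move=> mu w nu /(Yplus_dom_conj hA hpair) [b hb] hR.
have [hle hlat] := Rw_bound hA hpair hR hb.
split=> [|a b' ha hb']; first exact: (Yplus_of_orbit_le hacv hA hpair hle hlat).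
have [hle' hlat'] := Rw_bound hA hpair hR hb'.
exact: (leQ_dom_conj hacv ha hle' hlat').
Qed.
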